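(* For all matches $(p,\sigma)$ and $(q,\rho)$ with $p,\sigma\sqsubseteq q,\rho$, and for every substitution $\theta$, it holds that $p,\theta[\sigma]\sqsubseteq q,\theta[\rho]$.
   Context: CPC patterns over a countable set of names: $p ::= \lambda x \mid x \mid \ulcorner x\urcorner \mid p\bullet p$ (binding name, variable name, protected name, compound). ${\sf bn}(p)$, ${\sf vn}(p)$, ${\sf pn}(p)$ are the sets of binding, variable and protected names of $p$; ${\sf fn}(p)={\sf vn}(p)\cup{\sf pn}(p)$. Patterns are well formed (binding names pairwise distinct and distinct from free names). Communicable patterns contain no protected or binding names; protection extends to them by $\ulcorner p\bullet q\urcorner=\ulcorner p\urcorner\bullet\ulcorner q\urcorner$. A substitution is a finite partial function from names to communicable patterns, applied to patterns by $\sigma x=\sigma(x)$ if $x\in{\sf dom}(\sigma)$ else $x$; $\sigma\ulcorner x\urcorner=\ulcorner\sigma(x)\urcorner$ if $x\in{\sf dom}(\sigma)$ else $\ulcorner x\urcorner$; $\sigma(\lambda x)=\lambda x$; $\sigma(p\bullet q)=\sigma p\bullet\sigma q$. $\hat\sigma$ acts by $\hat\sigma x=x$, $\hat\sigma\ulcorner x\urcorner=\ulcorner x\urcorner$, $\hat\sigma(\lambda x)=\sigma(x)$ if $x\in{\sf dom}(\sigma)$ else $\lambda x$, $\hat\sigma(p\bullet q)=\hat\sigma p\bullet\hat\sigma q$. For substitutions $\theta,\sigma$, $\theta[\sigma]$ is the substitution with domain ${\sf dom}(\sigma)$ mapping each $x$ to $\theta(\sigma(x))$. A match $(p,\sigma)$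 is a pattern $p$ and substitution $\sigma$ with ${\sf dom}(\sigma)={\sf bn}(p)$. Compatibility $p,\sigma\sqsubseteq q,\rho$ is the least relation between matches with: $p,\sigma\sqsubseteq\lambda y,\{\hat\sigma p/y\}$ if ${\sf fn}(p)=\emptyset$; $n,\{\}\sqsubseteq n,\{\}$; $\ulcorner n\urcorner,\{\}\sqsubseteq\ulcorner n\urcorner,\{\}$; $\ulcorner n\urcorner,\{\}\sqsubseteq n,\{\}$; $p_1\bullet p_2,\sigma_1\cup\sigma_2\sqsubseteq q_1\bullet q_2,\rho_1\cup\rho_2$ if $p_i,\sigma_i\sqsubseteq q_i,\rho_i$ for $i=1,2$. *)

From mathcomp Require Import all_boot.
Set Implicit Arguments. Unset Strict Implicit. Unset Printing Implicit Defensive.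

Definition name := nat.

(* CPC patterns: p ::= \lambda x | x | ⌜x⌝ | p • p *)
Inductive pat : Type :=
| PBind of name
| PVar  of name
| PProt of name
| PComp of pat & pat .

Fixpoint bn (p : pat) : seq name :=
  match p with
  | PBind x => [:: x] | PVar _ => [::] | PProt _ => [::]
  | PComp p1 p2 => bn p1 ++ bn p2 end.

Fixpoint vn (p : pat) : seq name :=
  match p with
  | PVar x => [:: x] | PBind _ => [::] | PProt _ => [::]
  | PComp p1 p2 => vn p1 ++ vn p2 end.

Fixpoint pn (p : pat) : seq name :=
  match p with
  | PProt x => [:: x] | PBind _ => [::] | PVar _ => [::]
  | PComp p1 p2 => pn p1 ++ pn p2 end.

Definition fn (p : pat) : seq name := vn p ++ pn p.

Definition well_formed (p : pat) : Prop :=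
  uniq (bn p) /\ forall x, x \in bn p -> x \notin fn p.

Fixpoint communicable (p : pat) : bool :=
  match p with
  | PVar _ => true | PBind _ => false | PProt _ => false
  | PComp p1 p2 => communicable p1 && communicable p2 end.

(* Protection extended to communicable patterns:
   ⌜x⌝ on names, ⌜p•q⌝ = ⌜p⌝•⌜q⌝ (other cases are never used and left
   unchanged). *)
Fixpoint protect (p : pat) : pat :=
  match p with
  | PVar x => PProt x
  | PComp p1 p2 => PComp (protect p1) (protect p2)
  | q => q end.

(* Substitutions: partial functions from names to patterns
   (finiteness and communicability are imposed by [is_subst]). *)
Definition subst := name -> option pat.

Definition is_subst (s : subst) : Prop :=
  (exists d : seq name, forall x, s x <> None -> x \in d) /\
  (forall x v, s x = Some v -> communicable v).

Definition empty_subst : subst := fun _ => None.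

Definition single (y : name) (v : pat) : subst :=
  fun x => if x == y then Some v else None.

(* union of partial functions (used on disjoint domains) *)
Definition union_subst (s1 s2 : subst) : subst :=
  fun x => match s1 x with Some v => Some v | None => s2 x end.

Fixpoint subst_app (s : subst) (p : pat) : pat :=
  match p with
  | PVar x => match s x with Some v => v | None => PVar x end
  | PProt x => match s x with Some v => protect v | None => PProt x end
  | PBind x => PBind x
  | PComp p1 p2 => PComp (subst_app s p1) (subst_app s p2) end.

Fixpoint subst_hat (s : subst) (p : pat) : pat :=
  match p with
  | PVar x => PVar x
  | PProt x => PProt x
  | PBind x => match s x with Some v => v | None => PBind x end
  | PComp p1 p2 => PComp (subst_hat s p1) (subst_hat s p2) end.

Definition subst_comp (theta s : subst) : subst :=
  fun x => omap (subst_app theta) (s x).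

Definition is_match (p : pat) (s : subst) : Prop :=
  well_formed p /\ is_subst s /\ (forall x, s x <> None <-> x \in bn p).

Inductive compat : pat -> subst -> pat -> subst -> Prop :=
| compat_bind p s y r :
    is_match p s -> is_match (PBind y) r ->
    fn p = [::] ->
    r =1 single y (subst_hat s p) ->
    compat p s (PBind y) r
| compat_var n s r :
    is_match (PVar n) s -> is_match (PVar n) r ->
    s =1 empty_subst -> r =1 empty_subst ->
    compat (PVar n) s (PVar n) r
| compat_prot n s r :
    is_match (PProt n) s -> is_match (PProt n) r ->
    s =1 empty_subst -> r =1 empty_subst ->
    compat (PProt n) s (PProt n) r
| compat_prot_var n s r :
    is_match (PProt n) s -> is_match (PVar n) r ->
    s =1 empty_subst -> r =1 empty_subst ->
    compat (PProt n) s (PVar n) r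
| compat_comp p1 p2 q1 q2 s1 s2 r1 r2 s r :
    is_match (PComp p1 p2) s -> is_match (PComp q1 q2) r ->
    compat p1 s1 q1 r1 -> compat p2 s2 q2 r2 ->
    s =1 union_subst s1 s2 -> r =1 union_subst r1 r2 ->
    compat (PComp p1 p2) s (PComp q1 q2) r.

(* Composing with [theta] commutes with every rule of compatibility: it
   preserves matches (communicable values stay communicable, domains are
   unchanged), the empty substitution and unions of substitutions, and on
   a pattern without free names it turns [hat sigma p] into
   [hat (theta[sigma]) p]. Induction on the derivation of compatibility
   then gives the result. *)
From mathcomp Require Import all_boot.

Lemma fn_PComp_nil p1 p2 :
  fn (PComp p1 p2) = [::] -> fn p1 = [::] /\ fn p2 = [::].
Proof.
rewrite /fn /= => /(congr1 size)/eqP.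
rewrite !size_cat !addn_eq0 !size_eq0.
by move=> /andP [/andP [/eqP-> /eqP->] /andP [/eqP-> /eqP->]].
Qed.

Section SubstComp.

Variable theta : subst.
Hypothesis theta_subst : is_subst theta.

Lemma communicable_subst_app v :
  communicable v -> communicable (subst_app theta v).
Proof.
have [_ theta_comm] := theta_subst.
elim: v => //= [x _|p1 IH1 p2 IH2 /andP [c1 c2]].
- by case E: (theta x) => [w|] //; apply: theta_comm E.
- by rewrite IH1 ?IH2.
Qed.

Lemma is_match_subst_comp p s : is_match p s -> is_match p (subst_comp theta s).
Proof.
move=> [wf_p [[[d dom_d] s_comm] dom_s]]; split=> //; split; [split|].
- by exists d => x; rewrite /subst_comp; case E: (s x) => //= _; apply: dom_d; rewrite E.
- move=> x v; rewrite /subst_comp; case E: (s x) => [u|] //= [<-].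
  exact/communicable_subst_app/(s_comm _ _ E).
- move=> x; rewrite /subst_comp; split=> [|/dom_s]; last by case: (s x).
  by move=> some_x; apply/dom_s; case: (s x) some_x.
Qed.

Lemma subst_comp_empty s : s =1 empty_subst -> subst_comp theta s =1 empty_subst.
Proof. by move=> s0 x; rewrite /subst_comp s0. Qed.

Lemma subst_comp_union s s1 s2 : s =1 union_subst s1 s2 ->
  subst_comp theta s =1 union_subst (subst_comp theta s1) (subst_comp theta s2).
Proof. by move=> s12 x; rewrite /subst_comp s12 /union_subst; case: (s1 x). Qed.

Lemma subst_comp_single y v :
  subst_comp theta (single y v) =1 single y (subst_app theta v).
Proof. by move=> x; rewrite /subst_comp /single; case: (x == y). Qed.

Lemma subst_app_hat s p : fn p = [::] ->
  subst_app theta (subst_hat s p) = subst_hat (subst_comp theta s) p.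
Proof.
elim: p => //= [x _|p1 IH1 p2 IH2 /fn_PComp_nil [fn1 fn2]].
- by rewrite /subst_comp; case: (s x).
- by rewrite IH1 // IH2.
Qed.

End SubstComp.

Theorem lemma3p16 (p q : pat) (sigma rho theta : subst) :
  is_subst theta ->
  compat p sigma q rho ->
  compat p (subst_comp theta sigma) q (subst_comp theta rho).
Proof.
move=> theta_subst; elim=> {p sigma q rho}.
- move=> p s y r mp my fn_p r_single; apply: compat_bind => //;
    try exact: is_match_subst_comp.
  by move=> x; rewrite -subst_app_hat // -subst_comp_single /subst_comp r_single.
- by move=> *; apply: compat_var;
    solve [exact: is_match_subst_comp | exact: subst_comp_empty].
- by move=> *; apply: compat_prot;
    solve [exact: is_match_subst_comp | exact: subst_comp_empty].
- by move=> *; apply: compat_prot_var;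
    solve [exact: is_match_subst_comp | exact: subst_comp_empty].
- move=> p1 p2 q1 q2 s1 s2 r1 r2 s r mp mq _ IH1 _ IH2 s12 r12.
  apply: (compat_comp _ _ IH1 IH2); try exact: is_match_subst_comp.
  + exact: subst_comp_union s12.
  + exact: subst_comp_union r12.
Qed.
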